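(* For every $n\ge 2$ there exists an update sequence of width $3$ in which $n$ points arrive on which every deterministic strict online embedding into HSTs has distortion at least $2^{n-2}$.
   Context: For $\mu\ge1$, a $\mu$-HST is the metric on the leaves of a rooted tree with node weights $\varphi\ge0$ ($\varphi(v)=0$ iff $v$ is a leaf, $\varphi(v)\le\varphi(u)/\mu$ when $v$ is a child of $u$), leaf distance $\varphi(\mathrm{lca}(u,v))$; ''HSTs'' is the family of such metrics. An update sequence on a metric $(X,d)$ is a sequence $(v_t,o_t)\in X\times\{+,-\}$ ($v_t$ arrives if $o_t=+$, leaves if $o_t=-$) with alive sets $L_0=\varnothing$, $L_t=L_{t-1}\cup\{v_t\}$ or $L_{t-1}\setminus\{v_t\}$; its width is $\max_t|L_t|$. A deterministic strict online embedding into HSTs outputs after $\sigma_t$ (depending only on $\sigma_1,\dots,\sigma_t$, the sequence being possibly chosen adaptively against the deterministic embedding) an HST metric $d_t$ on $L_t$ with $d_t(u,v)=d_{t-1}(u,v)$ for all $u,v\in L_{t-1}\cap L_t$. Its distortion is the least $\lambda$ for which there is $c>0$ with $d(u,v)\le c\,d_t(u,v)\le\lambda d(u,v)$ for all $t$ and $u,v\in L_t$. *)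

From Stdlib Require Import Reals List.
Import ListNotations.
Open Scope R_scope.

Set Implicit Arguments.

Section Defs.
Variable X : Type.

Definition is_metric (d : X -> X -> R) : Prop :=
  (forall x, d x x = 0) /\
  (forall x y, d x y = 0 -> x = y) /\
  (forall x y, d x y = d y x) /\
  (forall x y z, d x z <= d x y + d y z).

Inductive hst : Type :=
| Leaf : X -> hst
| Node : R -> list hst -> hst.

Definition weight (t : hst) : R :=
  match t with Leaf _ => 0 | Node w _ => w end.

Fixpoint leaves (t : hst) : list X :=
  match t with
  | Leaf x => [x]
  | Node _ cs => flat_map leaves cs
  end.

(* mu-HST weight conditions: phi(v) = 0 iff v is a leaf (internal nodes have
   at least one child and positive weight), and phi(child) <= phi(parent)/mu. *)
Inductive wf_hst (mu : R) : hst -> Prop :=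
| wf_leaf x : wf_hst mu (Leaf x)
| wf_node w cs :
    0 < w -> cs <> [] ->
    (forall c, In c cs -> weight c <= w / mu /\ wf_hst mu c) ->
    wf_hst mu (Node w cs).

(* lca_w t u v r : r is the weight of the least common ancestor of leaves u, v. *)
Inductive lca_w : hst -> X -> X -> R -> Prop :=
| lca_leaf x : lca_w (Leaf x) x x 0
| lca_here w cs u v i j ci cj :
    i <> j -> nth_error cs i = Some ci -> nth_error cs j = Some cj ->
    In u (leaves ci) -> In v (leaves cj) ->
    lca_w (Node w cs) u v w
| lca_down w cs c u v r :
    In c cs -> lca_w c u v r -> lca_w (Node w cs) u v r.

(* D restricted to the set P is an HST metric (the empty set is trivially one). *)
Definition is_hst_metric_on (P : X -> Prop) (D : X -> X -> R) : Prop :=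
  (forall x, ~ P x) \/
  exists (mu : R) (t : hst),
    1 <= mu /\ wf_hst mu t /\ NoDup (leaves t) /\
    (forall x, In x (leaves t) <-> P x) /\
    (forall u v, P u -> P v -> lca_w t u v (D u v)).

(* Update sequences: (v, true) = arrival "+", (v, false) = departure "-". *)
Fixpoint alive_rev (r : list (X * bool)) (x : X) : Prop :=
  match r with
  | [] => False
  | (v, true) :: r' => x = v \/ alive_rev r' x
  | (v, false) :: r' => x <> v /\ alive_rev r' x
  end.

(* alive s x  <->  x belongs to L_t where s = sigma_1 ... sigma_t. *)
Definition alive (s : list (X * bool)) (x : X) : Prop := alive_rev (rev s) x.

Definition width_le (sigma : list (X * bool)) (k : nat) : Prop :=
  forall t (l : list X), NoDup l -> (forall x, In x l -> alive (firstn t sigma) x) ->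
    (length l <= k)%nat.

Definition n_points_arrive (sigma : list (X * bool)) (n : nat) : Prop :=
  let arr := map fst (filter (fun e => snd e) sigma) in
  length arr = n /\ NoDup arr.

(* A deterministic online embedding: after the prefix s it outputs A s,
   a function on pairs of points (only its values on L_t matter). *)
Definition strict_online_hst_embedding (A : list (X * bool) -> X -> X -> R) : Prop :=
  (forall s, is_hst_metric_on (alive s) (A s)) /\
  (forall s e u v, alive s u -> alive s v ->
     alive (s ++ [e]) u -> alive (s ++ [e]) v ->
     A (s ++ [e]) u v = A s u v).

(* "distortion of A on sigma is at least lam0": every admissible (c, lam) has lam >= lam0. *)
Definition distortion_ge (d : X -> X -> R) (A : list (X * bool) -> X -> X -> R)
    (sigma : list (X * bool)) (lam0 : R) : Prop :=
  forall c lam, 0 < c ->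
    (forall t u v, alive (firstn t sigma) u -> alive (firstn t sigma) v ->
       d u v <= c * A (firstn t sigma) u v /\ c * A (firstn t sigma) u v <= lam * d u v) ->
    lam0 <= lam.

End Defs.

(** The lengths in an HST metric are weights of least common ancestors, so
    they satisfy the ultrametric inequality.  Let the adversary work on the
    line: 0 and 1 arrive; while two points p < q are alive, the midpoint m
    arrives, and the embedding must have [d_t(p,q) <= max (d_t(p,m), d_t(m,q))].
    The adversary keeps the half whose embedded length is at least
    [d_t(p,q)] and deletes the other endpoint.  By strictness the embedded
    length of the surviving pair never changes afterwards, so after [n - 2]
    halvings a pair at real distance [2^-(n-2)] is embedded at least as long
    as the pair (0,1) at distance 1: the distortion is at least [2^(n-2)]. *)

From Stdlib Require Import Reals List Lia Lra Classical.
Import ListNotations.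
Open Scope R_scope.

Set Implicit Arguments.
Unset Strict Implicit.

Section HstUltrametric.
Variable X : Type.

Lemma NoDup_app_disjoint (l1 l2 : list X) x :
  NoDup (l1 ++ l2) -> In x l1 -> In x l2 -> False.
Proof.
  induction l1 as [|a l1 IH]; simpl; intros Hnd H1 H2; [easy|].
  inversion Hnd as [|? ? Hna]; subst. destruct H1 as [<-|H1].
  - apply Hna, in_or_app; auto.
  - eauto.
Qed.

Lemma child_index_unique (cs : list (hst X)) i j ci cj x :
  NoDup (flat_map (@leaves X) cs) ->
  nth_error cs i = Some ci -> nth_error cs j = Some cj ->
  In x (leaves ci) -> In x (leaves cj) -> i = j.
Proof.
  revert i j ci cj. induction cs as [|c cs IH];
    intros [|i] [|j] ci cj Hnd Hi Hj Hxi Hxj; simpl in *; try discriminate; auto.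
  - injection Hi as <-. exfalso. apply (NoDup_app_disjoint Hnd Hxi).
    apply in_flat_map. exists cj. split; [eapply nth_error_In|]; eauto.
  - injection Hj as <-. exfalso. apply (NoDup_app_disjoint Hnd Hxj).
    apply in_flat_map. exists ci. split; [eapply nth_error_In|]; eauto.
  - f_equal. eapply IH; eauto. eapply NoDup_app_remove_l; eauto.
Qed.

Lemma NoDup_leaves_child (cs : list (hst X)) c :
  NoDup (flat_map (@leaves X) cs) -> In c cs -> NoDup (leaves c).
Proof.
  induction cs as [|c' cs IH]; simpl; intros Hnd Hc; [easy|].
  destruct Hc as [<-|Hc].
  - eapply NoDup_app_remove_r; eauto.
  - apply IH; auto. eapply NoDup_app_remove_l; eauto.
Qed.

Lemma wf_hst_child mu w (cs : list (hst X)) c : 1 <= mu ->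
  wf_hst mu (Node w cs) -> In c cs -> wf_hst mu c /\ weight c <= w.
Proof.
  intros Hmu Hwf Hc. inversion Hwf as [|? ? Hw _ Hcs]; subst.
  destruct (Hcs c Hc) as [Hle Hwfc]. split; [exact Hwfc|].
  enough (w / mu <= w) by lra.
  apply Rmult_le_reg_r with mu; [lra|].
  unfold Rdiv. rewrite Rmult_assoc, Rinv_l, Rmult_1_r by lra. nra.
Qed.

Lemma lca_w_leaves (t : hst X) u v r :
  lca_w t u v r -> In u (leaves t) /\ In v (leaves t).
Proof.
  induction 1 as [| | ? ? c ? ? ? Hc _ [Hu Hv]]; simpl.
  - auto.
  - split; apply in_flat_map; eexists; split; eauto; eapply nth_error_In; eauto.
  - split; apply in_flat_map; eauto.
Qed.

Lemma lca_w_bounds mu (t : hst X) u v r : 1 <= mu ->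
  wf_hst mu t -> lca_w t u v r -> 0 <= r <= weight t.
Proof.
  intros Hmu Hwf Hlca. revert Hwf.
  induction Hlca as [| | w cs c ? ? ? Hc _ IH]; intros Hwf; simpl.
  - lra.
  - inversion Hwf; subst. lra.
  - destruct (wf_hst_child Hmu Hwf Hc) as [Hwfc Hle].
    specialize (IH Hwfc). lra.
Qed.

Lemma lca_w_Node_child W (cs : list (hst X)) u v r k c :
  NoDup (flat_map (@leaves X) cs) -> lca_w (Node W cs) u v r ->
  nth_error cs k = Some c -> In u (leaves c) ->
  (In v (leaves c) -> lca_w c u v r) /\ (~ In v (leaves c) -> r = W).
Proof.
  intros Hnd Hlca Hk Hu.
  inversion Hlca as [|? ? ? ? i j ci cj Hij Hi Hj Hui Hvj|? ? c0 ? ? ? Hc0 Hl];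
    subst.
  - assert (i = k) by exact (child_index_unique Hnd Hi Hk Hui Hu). subst i.
    split; [|easy]. intros Hv. exfalso.
    exact (Hij (child_index_unique Hnd Hk Hj Hv Hvj)).
  - destruct (In_nth_error _ _ Hc0) as [k0 Hk0].
    destruct (lca_w_leaves Hl) as [Hu0 Hv0].
    assert (k0 = k) by exact (child_index_unique Hnd Hk0 Hk Hu0 Hu). subst k0.
    rewrite Hk in Hk0. injection Hk0 as <-. split; [auto|contradiction].
Qed.

(* Induction on the derivation for [(u, v)]: either [w] lies in the child
   containing [u] and [v], or one of the two other pairs is separated at a
   node at least as heavy as the lca of [u] and [v]. *)
Lemma lca_w_ultrametric mu (t : hst X) u v w r1 r2 r3 : 1 <= mu ->
  wf_hst mu t -> NoDup (leaves t) ->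
  lca_w t u v r1 -> lca_w t u w r2 -> lca_w t w v r3 -> r1 <= Rmax r2 r3.
Proof.
  intros Hmu Hwf Hnd Hlca. revert r2 r3 Hwf Hnd.
  induction Hlca as [x|W cs u v i j ci cj Hij Hi Hj Hu Hv|W cs c u v r Hc Hl IH];
    intros r2 r3 Hwf Hnd Huw Hwv.
  - destruct (lca_w_bounds Hmu Hwf Huw). eapply Rle_trans; [|apply Rmax_l]. lra.
  - simpl in Hnd. destruct (lca_w_leaves Huw) as [_ Hw].
    apply in_flat_map in Hw. destruct Hw as [ck [Hck Hw]].
    destruct (In_nth_error _ _ Hck) as [k Hk].
    destruct (Nat.eq_dec k i) as [->|Hki].
    + rewrite Hi in Hk. injection Hk as <-.
      assert (Hv' : ~ In v (leaves ci))
        by exact (fun Hv' => Hij (child_index_unique Hnd Hi Hj Hv' Hv)).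
      rewrite (proj2 (lca_w_Node_child Hnd Hwv Hi Hw) Hv'). apply Rmax_r.
    + assert (Hw' : ~ In w (leaves ci))
        by exact (fun Hw' => Hki (child_index_unique Hnd Hk Hi Hw Hw')).
      rewrite (proj2 (lca_w_Node_child Hnd Huw Hi Hu) Hw'). apply Rmax_l.
  - simpl in Hnd. destruct (In_nth_error _ _ Hc) as [k Hk].
    destruct (lca_w_leaves Hl) as [Hu Hv].
    destruct (wf_hst_child Hmu Hwf Hc) as [Hwfc Hle].
    destruct (classic (In w (leaves c))) as [Hw|Hw].
    + apply IH; [exact Hwfc|exact (NoDup_leaves_child Hnd Hc)| |].
      * exact (proj1 (lca_w_Node_child Hnd Huw Hk Hu) Hw).
      * exact (proj1 (lca_w_Node_child Hnd Hwv Hk Hw) Hv).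
    + rewrite (proj2 (lca_w_Node_child Hnd Huw Hk Hu) Hw).
      destruct (lca_w_bounds Hmu Hwfc Hl).
      eapply Rle_trans; [|apply Rmax_l]. lra.
Qed.

Lemma hst_metric_ultrametric (P : X -> Prop) D u v w :
  is_hst_metric_on P D -> P u -> P v -> P w -> D u v <= Rmax (D u w) (D w v).
Proof.
  intros [Hempty|[mu [t [Hmu [Hwf [Hnd [_ Hlca]]]]]]] Hu Hv Hw.
  - now destruct (Hempty u).
  - eapply lca_w_ultrametric; eauto.
Qed.

End HstUltrametric.

Section UpdateSequences.
Variable X : Type.
Implicit Types (s : list (X * bool)) (A : list (X * bool) -> X -> X -> R).

Lemma alive_snoc_arrival s v x :
  alive (s ++ [(v, true)]) x <-> x = v \/ alive s x.
Proof. unfold alive. rewrite rev_app_distr. reflexivity. Qed.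

Lemma alive_snoc_departure s v x :
  alive (s ++ [(v, false)]) x <-> x <> v /\ alive s x.
Proof. unfold alive. rewrite rev_app_distr. reflexivity. Qed.

Definition arrivals s : list X := map fst (filter snd s).

Lemma arrivals_snoc_arrival s v : arrivals (s ++ [(v, true)]) = arrivals s ++ [v].
Proof. unfold arrivals. rewrite filter_app, map_app. reflexivity. Qed.

Lemma arrivals_snoc_departure s v : arrivals (s ++ [(v, false)]) = arrivals s.
Proof. unfold arrivals. rewrite filter_app, map_app, app_nil_r. reflexivity. Qed.

Definition alive_size_le s k : Prop :=
  forall l, NoDup l -> (forall x, In x l -> alive s x) -> (length l <= k)%nat.

Lemma alive_size_le_incl s (xs : list X) :
  (forall x, alive s x -> In x xs) -> alive_size_le s (length xs).
Proof.
  intros Hxs l Hnd Hl. apply NoDup_incl_length; [exact Hnd|].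
  intros x Hx. exact (Hxs x (Hl x Hx)).
Qed.

Lemma width_le_nil k : width_le (@nil (X * bool)) k.
Proof.
  intros t [|x l] _ Hl; simpl; [lia|].
  rewrite firstn_nil in Hl. destruct (Hl x (or_introl eq_refl)).
Qed.

Lemma width_le_snoc s e k :
  width_le s k -> alive_size_le (s ++ [e]) k -> width_le (s ++ [e]) k.
Proof.
  intros Hs He t. rewrite firstn_app.
  destruct (t - length s)%nat eqn:Ht; simpl.
  - rewrite app_nil_r. apply Hs.
  - rewrite firstn_nil, firstn_all2 by lia. exact He.
Qed.

Lemma distortion_ge_of_le (d : X -> X -> R) A sigma t1 t2 u1 v1 u2 v2 :
  alive (firstn t1 sigma) u1 -> alive (firstn t1 sigma) v1 ->
  alive (firstn t2 sigma) u2 -> alive (firstn t2 sigma) v2 ->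
  0 < d u2 v2 ->
  A (firstn t1 sigma) u1 v1 <= A (firstn t2 sigma) u2 v2 ->
  distortion_ge d A sigma (d u1 v1 / d u2 v2).
Proof.
  intros Hu1 Hv1 Hu2 Hv2 Hd Hle c lam Hc Hemb.
  destruct (Hemb t1 u1 v1 Hu1 Hv1) as [Hlow _].
  destruct (Hemb t2 u2 v2 Hu2 Hv2) as [_ Hup].
  assert (c * A (firstn t1 sigma) u1 v1 <= c * A (firstn t2 sigma) u2 v2)
    by (apply Rmult_le_compat_l; lra).
  apply Rmult_le_reg_r with (d u2 v2); [exact Hd|].
  unfold Rdiv. rewrite Rmult_assoc, Rinv_l by lra. lra.
Qed.

Lemma embedding_arrival_ultrametric A s p q m :
  strict_online_hst_embedding A -> alive s p -> alive s q ->
  A s p q <= Rmax (A (s ++ [(m, true)]) p m) (A (s ++ [(m, true)]) m q).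
Proof.
  intros [Hhst Hstrict] Hp Hq.
  assert (Hp' : alive (s ++ [(m, true)]) p) by (apply alive_snoc_arrival; auto).
  assert (Hq' : alive (s ++ [(m, true)]) q) by (apply alive_snoc_arrival; auto).
  assert (Hm' : alive (s ++ [(m, true)]) m) by (apply alive_snoc_arrival; auto).
  rewrite <- (Hstrict s (m, true) p q) by auto.
  exact (hst_metric_ultrametric (Hhst _) Hp' Hq' Hm').
Qed.

Lemma embedding_departure_stable A s v u w :
  strict_online_hst_embedding A ->
  alive (s ++ [(v, false)]) u -> alive (s ++ [(v, false)]) w ->
  A (s ++ [(v, false)]) u w = A s u w.
Proof.
  intros [_ Hstrict] Hu Hw. apply Hstrict; auto.
  - exact (proj2 (proj1 (alive_snoc_departure s v u) Hu)).
  - exact (proj2 (proj1 (alive_snoc_departure s v w) Hw)).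
Qed.

End UpdateSequences.

Lemma Rdist_is_metric : is_metric Rdist.
Proof.
  split; [|split; [|split]].
  - exact Rdist_eq.
  - intros x y. apply Rdist_refl.
  - exact Rdist_sym.
  - intros x y z. apply Rdist_tri.
Qed.

Definition start : list (R * bool) := [(0, true); (1, true)].

Inductive halving : nat -> list (R * bool) -> R -> R -> Prop :=
| halving_start : halving 0 start 0 1
| halving_left k s p q : halving k s p q ->
    halving (S k) ((s ++ [((p + q) / 2, true)]) ++ [(q, false)]) p ((p + q) / 2)
| halving_right k s p q : halving k s p q ->
    halving (S k) ((s ++ [((p + q) / 2, true)]) ++ [(p, false)]) ((p + q) / 2) q.

Lemma halving_gap k s p q : halving k s p q -> q - p = / 2 ^ k.
Proof.
  induction 1 as [| k s p q _ IH | k s p q _ IH]; simpl.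
  - lra.
  - rewrite Rinv_mult. lra.
  - rewrite Rinv_mult. lra.
Qed.

Lemma halving_lt k s p q : halving k s p q -> p < q.
Proof.
  intros Hh. apply halving_gap in Hh.
  assert (0 < / 2 ^ k) by (apply Rinv_0_lt_compat, pow_lt; lra). lra.
Qed.

Lemma halving_alive k s p q : halving k s p q ->
  forall x, alive s x <-> x = p \/ x = q.
Proof.
  induction 1 as [| k s p q Hh IH | k s p q Hh IH]; intros x.
  - unfold alive, start. simpl. tauto.
  - apply halving_lt in Hh.
    rewrite alive_snoc_departure, alive_snoc_arrival, IH.
    split; [tauto|intros [-> | ->]; split; lra].
  - apply halving_lt in Hh.
    rewrite alive_snoc_departure, alive_snoc_arrival, IH.
    split; [tauto|intros [-> | ->]; split; lra].
Qed.

Lemma halving_prefix k s p q : halving k s p q -> exists tl, s = start ++ tl.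
Proof.
  induction 1 as [| k s p q _ [tl ->] | k s p q _ [tl ->]].
  - exists []. symmetry. apply app_nil_r.
  - eexists. rewrite <- !app_assoc. reflexivity.
  - eexists. rewrite <- !app_assoc. reflexivity.
Qed.

(* The third conjunct is what makes each new midpoint a fresh arrival. *)
Lemma halving_arrivals k s p q : halving k s p q ->
  NoDup (arrivals s) /\ length (arrivals s) = S (S k) /\
  forall x, In x (arrivals s) -> x <= p \/ q <= x.
Proof.
  assert (Hsnoc : forall (l : list R) m, NoDup l -> ~ In m l -> NoDup (l ++ [m])).
  { intros l m Hl Hm. apply NoDup_app; [exact Hl|repeat constructor; easy|].
    intros y Hy [<-|[]]. contradiction. }
  induction 1 as [| k s p q Hh [Hnd [Hlen Hout]] | k s p q Hh [Hnd [Hlen Hout]]].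
  - unfold arrivals, start; simpl. split; [|split; [reflexivity|]].
    + constructor; [intros [H|[]]; lra|]. constructor; [easy|constructor].
    + intros x [<-|[<-|[]]]; lra.
  - apply halving_lt in Hh.
    rewrite arrivals_snoc_departure, arrivals_snoc_arrival, length_app, Hlen.
    split; [|split; [simpl; lia|]].
    + apply Hsnoc; [exact Hnd|]. intros Hm. destruct (Hout _ Hm); lra.
    + intros x [Hx|[<-|[]]]%in_app_or; [destruct (Hout _ Hx)|]; lra.
  - apply halving_lt in Hh.
    rewrite arrivals_snoc_departure, arrivals_snoc_arrival, length_app, Hlen.
    split; [|split; [simpl; lia|]].
    + apply Hsnoc; [exact Hnd|]. intros Hm. destruct (Hout _ Hm); lra.
    + intros x [Hx|[<-|[]]]%in_app_or; [destruct (Hout _ Hx)|]; lra.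
Qed.

Lemma halving_width k s p q : halving k s p q -> width_le s 3.
Proof.
  induction 1 as [| k s p q Hh IH | k s p q Hh IH].
  - change start with (([] ++ [(0, true)]) ++ [(1, true)]).
    apply width_le_snoc; [apply width_le_snoc; [apply width_le_nil|]|];
      apply (alive_size_le_incl (xs := [0; 1; 1])); unfold alive; simpl;
      intuition (subst; auto).
  - pose proof (halving_left Hh) as Hh'.
    apply width_le_snoc; [apply width_le_snoc; [exact IH|]|].
    + apply (alive_size_le_incl (xs := [(p + q) / 2; p; q])).
      intros x Hx. apply alive_snoc_arrival in Hx.
      rewrite (halving_alive Hh) in Hx. simpl. intuition (subst; auto).
    + apply (alive_size_le_incl (xs := [p; (p + q) / 2; p])).
      intros x Hx. apply (halving_alive Hh') in Hx. simpl. intuition (subst; auto).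
  - pose proof (halving_right Hh) as Hh'.
    apply width_le_snoc; [apply width_le_snoc; [exact IH|]|].
    + apply (alive_size_le_incl (xs := [(p + q) / 2; p; q])).
      intros x Hx. apply alive_snoc_arrival in Hx.
      rewrite (halving_alive Hh) in Hx. simpl. intuition (subst; auto).
    + apply (alive_size_le_incl (xs := [(p + q) / 2; q; q])).
      intros x Hx. apply (halving_alive Hh') in Hx. simpl. intuition (subst; auto).
Qed.

Lemma halving_distortion (A : list (R * bool) -> R -> R -> R) k s p q :
  halving k s p q -> A start 0 1 <= A s p q -> distortion_ge Rdist A s (2 ^ k).
Proof.
  intros Hh Hgrow.
  assert (Hstart : firstn 2 s = start)
    by (destruct (halving_prefix Hh) as [tl ->]; reflexivity).
  assert (Hgap : Rdist p q = / 2 ^ k).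
  { unfold Rdist. rewrite Rabs_left by (pose proof (halving_lt Hh); lra).
    rewrite <- (halving_gap Hh). ring. }
  replace (2 ^ k) with (Rdist 0 1 / Rdist p q).
  2:{ rewrite Hgap. unfold Rdist. rewrite Rabs_left by lra.
      field. apply pow_nonzero. lra. }
  apply distortion_ge_of_le with (t1 := 2%nat) (t2 := length s);
    rewrite ?Hstart, ?firstn_all.
  - unfold alive, start. simpl. tauto.
  - unfold alive, start. simpl. tauto.
  - apply (halving_alive Hh). tauto.
  - apply (halving_alive Hh). tauto.
  - rewrite Hgap. apply Rinv_0_lt_compat, pow_lt. lra.
  - exact Hgrow.
Qed.

Fixpoint adversary (A : list (R * bool) -> R -> R -> R) (k : nat)
  : list (R * bool) * R * R :=
  match k with
  | O => (start, 0, 1)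
  | S k =>
    let '(s, p, q) := adversary A k in
    let m := (p + q) / 2 in
    let s' := s ++ [(m, true)] in
    if Rle_dec (A s p q) (A s' p m) then (s' ++ [(q, false)], p, m)
    else (s' ++ [(p, false)], m, q)
  end.

Lemma adversary_spec A : strict_online_hst_embedding A ->
  forall k s p q, adversary A k = (s, p, q) ->
  halving k s p q /\ A start 0 1 <= A s p q.
Proof.
  intros HA. induction k as [|k IH]; intros s p q Hk; simpl in Hk.
  - injection Hk as <- <- <-. split; [constructor|lra].
  - destruct (adversary A k) as [[s0 p0] q0].
    destruct (IH s0 p0 q0 eq_refl) as [Hh Hgrow].
    assert (Hp0 : alive s0 p0) by (apply (halving_alive Hh); auto).
    assert (Hq0 : alive s0 q0) by (apply (halving_alive Hh); auto).
    pose proof (embedding_arrival_ultrametric ((p0 + q0) / 2) HA Hp0 Hq0)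
      as Hsplit.
    destruct (Rle_dec _ _) as [Hleft|Hnleft]; injection Hk as <- <- <-.
    + pose proof (halving_left Hh) as Hh'. split; [exact Hh'|].
      rewrite embedding_departure_stable; [lra|exact HA| |];
        apply (halving_alive Hh'); auto.
    + pose proof (halving_right Hh) as Hh'. split; [exact Hh'|].
      apply Rmax_Rle in Hsplit.
      destruct Hsplit as [|Hright]; [contradiction|].
      rewrite embedding_departure_stable; [lra|exact HA| |];
        apply (halving_alive Hh'); auto.
Qed.

Theorem mainTheorem20 :
  forall n : nat, (2 <= n)%nat ->
  exists (X : Type) (d : X -> X -> R), is_metric d /\
    forall A : list (X * bool) -> X -> X -> R,
      strict_online_hst_embedding A ->
      exists sigma : list (X * bool),
        width_le sigma 3 /\ n_points_arrive sigma n /\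
        distortion_ge d A sigma (2 ^ (n - 2)).
Proof.
  intros n Hn. exists R, Rdist. split; [exact Rdist_is_metric|].
  intros A HA. destruct (adversary A (n - 2)) as [[s p] q] eqn:Hadv.
  destruct (adversary_spec HA Hadv) as [Hh Hgrow].
  destruct (halving_arrivals Hh) as [Hnd [Hlen _]].
  exists s. split; [|split].
  - exact (halving_width Hh).
  - split; [change (length (arrivals s) = n); rewrite Hlen; lia|exact Hnd].
  - exact (halving_distortion Hh Hgrow).
Qed.
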